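(* Let $n \in \mathbb{N}$, let $\mathbf{A}_1, \dots, \mathbf{A}_n$ and $\mathbf{B}$ be additive categories with cokernels, and let $F: \mathbf{A}_1 \times \dots \times \mathbf{A}_n \to \mathbf{B}$ be a multilinear functor. Then $F$ is right exact if and only if for every tuple of morphisms $(\alpha_i : b_i \to a_i)_{i=1,\dots,n}$ with $\alpha_i$ a morphism in $\mathbf{A}_i$, the sequence \[ \bigoplus_{j=1}^{n} F(a_1, \dots, a_{j-1}, b_j, a_{j+1}, \dots, a_n) \xrightarrow{\ \big(F(\mathrm{id}_{a_1}, \dots, \mathrm{id}_{a_{j-1}}, \alpha_j, \mathrm{id}_{a_{j+1}}, \dots, \mathrm{id}_{a_n})\big)_{j}\ } F(a_1, \dots, a_n) \longrightarrow F(\operatorname{cok}\alpha_1, \dots, \operatorname{cok}\alpha_n) \longrightarrow 0 \] is exact (where the middle morphism is $F$ applied to the cokernel projections), i.e. $F(a_1,\dots,a_n) \to F(\operatorname{cok}\alpha_1, \dots, \operatorname{cok}\alpha_n)$ is a cokernel of the first morphism.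
   Context: A functor $F: \mathbf{A}_1 \times \dots \times \mathbf{A}_n \to \mathbf{B}$ between additive categories is called multilinear if it is additive in each component separately. If all categories have cokernels, a multilinear $F$ is called right exact if it is componentwise right exact: for every $k \in \{1,\dots,n\}$, all objects $a_i \in \mathbf{A}_i$ ($i \neq k$) and every morphism $\alpha_k$ in $\mathbf{A}_k$, the natural morphism $\operatorname{cok}\big(F(a_1,\dots,a_{k-1},\alpha_k,a_{k+1},\dots,a_n)\big) \to F(a_1,\dots,a_{k-1},\operatorname{cok}(\alpha_k),a_{k+1},\dots,a_n)$ is an isomorphism. The first morphism of the sequence is the row whose $j$-th entry is $F$ applied to $\alpha_j$ in slot $j$ and to identities elsewhere. *)

From HB Require Import structures.
From mathcomp Require Import all_boot all_algebra.
Set Implicit Arguments. Unset Strict Implicit. Unset Printing Implicit Defensive.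
Import GRing.Theory.
Local Open Scope ring_scope.

(* An additive category with (chosen) cokernels.  Composition is written in
   diagrammatic order: [comp f g] is "first f, then g". *)
Record AddCat := {
  Ob : Type;
  Hom : Ob -> Ob -> zmodType;
  idm : forall a, Hom a a;
  comp : forall {a b c}, Hom a b -> Hom b c -> Hom a c;
  comp_id_l : forall a b (f : Hom a b), comp (idm a) f = f;
  comp_id_r : forall a b (f : Hom a b), comp f (idm b) = f;
  comp_assoc : forall a b c d (f : Hom a b) (g : Hom b c) (h : Hom c d),
      comp (comp f g) h = comp f (comp g h);
  comp_addl : forall a b c (f f' : Hom a b) (g : Hom b c),
      comp (f + f') g = comp f g + comp f' g;
  comp_addr : forall a b c (f : Hom a b) (g g' : Hom b c),
      comp f (g + g') = comp f g + comp f g';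
  zob : Ob;
  zob_init : forall a (f : Hom zob a), f = 0;
  zob_term : forall a (f : Hom a zob), f = 0;
  biprod : Ob -> Ob -> Ob;
  bp_inl : forall a b, Hom a (biprod a b);
  bp_inr : forall a b, Hom b (biprod a b);
  bp_outl : forall a b, Hom (biprod a b) a;
  bp_outr : forall a b, Hom (biprod a b) b;
  bp_ll : forall a b, comp (bp_inl a b) (bp_outl a b) = idm a;
  bp_rr : forall a b, comp (bp_inr a b) (bp_outr a b) = idm b;
  bp_lr : forall a b, comp (bp_inl a b) (bp_outr a b) = 0;
  bp_rl : forall a b, comp (bp_inr a b) (bp_outl a b) = 0;
  bp_sum : forall a b, comp (bp_outl a b) (bp_inl a b)
                       + comp (bp_outr a b) (bp_inr a b) = idm (biprod a b);
  cok : forall a b, Hom a b -> Ob;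
  cokpi : forall a b (f : Hom a b), Hom b (cok f);
  cokdesc : forall a b (f : Hom a b) c, Hom b c -> Hom (cok f) c;
  cok_zero : forall a b (f : Hom a b), comp f (cokpi f) = 0;
  cok_fac : forall a b (f : Hom a b) c (g : Hom b c),
      comp f g = 0 -> comp (cokpi f) (cokdesc f g) = g;
  cok_epi : forall a b (f : Hom a b) c (h h' : Hom (cok f) c),
      comp (cokpi f) h = comp (cokpi f) h' -> h = h'
}.

Arguments Hom {C} : rename.
Arguments idm {C} : rename.
Arguments comp {C a b c} : rename.
Arguments zob {C} : rename.
Arguments biprod {C} : rename.
Arguments bp_inl {C} : rename.
Arguments bp_inr {C} : rename.
Arguments bp_outl {C} : rename.
Arguments bp_outr {C} : rename.
Arguments cok {C a b} : rename.
Arguments cokpi {C a b} : rename.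
Arguments cokdesc {C a b} f {c} : rename.

Section Basics.
Variable C : AddCat.

Definition is_iso (a b : Ob C) (u : Hom a b) : Prop :=
  exists v : Hom b a, comp u v = idm a /\ comp v u = idm b.

Definition is_cokernel (a b c : Ob C) (f : Hom a b) (g : Hom b c) : Prop :=
  comp f g = 0 /\
  forall d (h : Hom b d), comp f h = 0 ->
    exists u : Hom c d, comp g u = h /\
      forall u' : Hom c d, comp g u' = h -> u' = u.

Definition copair (a b t : Ob C) (f : Hom a t) (g : Hom b t)
  : Hom (biprod a b) t := comp (bp_outl a b) f + comp (bp_outr a b) g.

Definition dsum (I : Type) (o : I -> Ob C) (s : seq I) : Ob C :=
  foldr (fun j acc => biprod (o j) acc) zob s.

Fixpoint rowmor (I : Type) (o : I -> Ob C) (t : Ob C)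
    (f : forall j, Hom (o j) t) (s : seq I) : Hom (dsum o s) t :=
  match s return Hom (dsum o s) t with
  | [::] => 0
  | j :: s' => copair (f j) (rowmor f s')
  end.
End Basics.

Section Product.
Local Unset Implicit Arguments.
Variables (n : nat) (A : 'I_n -> AddCat).

Definition obfam := forall i : 'I_n, Ob (A i).
Definition homfam (x y : obfam) := forall i : 'I_n, Hom (x i) (y i).
Definition idfam (x : obfam) : homfam x x := fun i => idm (x i).

Definition upd (x : obfam) (k : 'I_n) (c : Ob (A k)) : obfam :=
  fun i => match k =P i with
           | ReflectT e => eq_rect k (fun j => Ob (A j)) c i e
           | ReflectF _ => x i
           end.

(* the family (id, ..., id, f, id, ..., id) : x[k:=c] -> x[k:=d], f in slot k *)
Definition slotm (x : obfam) (k : 'I_n) (c d : Ob (A k)) (f : Hom c d)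
  : homfam (upd x k c) (upd x k d) :=
  fun i =>
    match k =P i as r return
      Hom (match r with
           | ReflectT e => eq_rect k (fun j => Ob (A j)) c i e
           | ReflectF _ => x i end)
          (match r with
           | ReflectT e => eq_rect k (fun j => Ob (A j)) d i e
           | ReflectF _ => x i end) with
    | ReflectT e =>
        match e as e0 in _ = i0 return
          Hom (eq_rect k (fun j => Ob (A j)) c i0 e0)
              (eq_rect k (fun j => Ob (A j)) d i0 e0) with
        | erefl => f end
    | ReflectF _ => idm (x i)
    end.

(* (id, ..., id, f, id, ..., id) : x[k:=c] -> x, for f : c -> x_k *)
Definition slotin (x : obfam) (k : 'I_n) (c : Ob (A k)) (f : Hom c (x k))
  : homfam (upd x k c) x :=
  fun i =>
    match k =P i as r return
      Hom (match r with
           | ReflectT e => eq_rect k (fun j => Ob (A j)) c i e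
           | ReflectF _ => x i end) (x i) with
    | ReflectT e =>
        match e as e0 in _ = i0 return
          Hom (eq_rect k (fun j => Ob (A j)) c i0 e0) (x i0) with
        | erefl => f end
    | ReflectF _ => idm (x i)
    end.

(* (id, ..., id, f, id, ..., id) : x -> x[k:=d], for f : x_k -> d *)
Definition slotout (x : obfam) (k : 'I_n) (d : Ob (A k)) (f : Hom (x k) d)
  : homfam x (upd x k d) :=
  fun i =>
    match k =P i as r return
      Hom (x i) (match r with
           | ReflectT e => eq_rect k (fun j => Ob (A j)) d i e
           | ReflectF _ => x i end) with
    | ReflectT e =>
        match e as e0 in _ = i0 return
          Hom (x i0) (eq_rect k (fun j => Ob (A j)) d i0 e0) with
        | erefl => f end
    | ReflectF _ => idm (x i)
    end.
End Product.
Arguments obfam {n} A.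
Arguments homfam {n A} x y.
Arguments upd {n A} x k c i.
Arguments slotm {n A} x {k c d} f i.
Arguments slotin {n A x k c} f i.
Arguments slotout {n A} x {k d} f i.
Arguments idfam {n A} x i.

Record ProdFunctor (n : nat) (A : 'I_n -> AddCat) (B : AddCat) := {
  Fo : obfam A -> Ob B;
  Fm : forall x y : obfam A, homfam x y -> Hom (Fo x) (Fo y);
  Fm_id : forall x, Fm (idfam x) = idm (Fo x);
  Fm_comp : forall x y z (f : homfam x y) (g : homfam y z),
      Fm (fun i => comp (f i) (g i)) = comp (Fm f) (Fm g)
}.
Arguments Fo {n A B} F x : rename.
Arguments Fm {n A B} F {x y} f : rename.

Section FunctorProps.
Variables (n : nat) (A : 'I_n -> AddCat) (B : AddCat) (F : ProdFunctor A B).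

Definition multilinear : Prop :=
  forall (x : obfam A) (k : 'I_n) (c d : Ob (A k)) (f g : Hom c d),
    Fm F (slotm x (f + g)) = Fm F (slotm x f) + Fm F (slotm x g).

(* componentwise right exact: for every k, objects x_i (i != k) and every
   alpha : c -> x_k in A_k, the natural morphism
   cok F(.., alpha, ..) -> F(.., cok alpha, ..) is an isomorphism. *)
Definition right_exact : Prop :=
  forall (x : obfam A) (k : 'I_n) (c : Ob (A k)) (alpha : Hom c (x k)),
    is_iso (cokdesc (Fm F (slotin alpha))
                    (Fm F (slotout x (cokpi alpha)))).

Definition first_mor (a b : obfam A) (alpha : homfam b a) :=
  rowmor (fun j => Fm F (slotin (alpha j))) (enum 'I_n).
End FunctorProps.

(* Forward direction: pass to the cokernels one slot at a time.  For a set [P]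
   of slots let [c_P] carry [cok alpha_i] in the slots of [P] and [a_i]
   elsewhere; by induction on [P], [F a -> F c_P] is a joint cokernel of the
   maps [F(.., alpha_j, ..)], [j] in [P].  To add a slot [k], compose with
   [F c_P -> F c_(P+k)], a cokernel of [F(.., alpha_k, ..)] taken at [c_P] by
   right exactness in slot [k].  Naturality rewrites [F(.., alpha_k, ..)] at [a]
   followed by [F a -> F c_P] as an epimorphism (the induction hypothesis with
   [b_k] in slot [k]) followed by [F(.., alpha_k, ..)] at [c_P], so the
   composite has the universal property.
   Backward direction: take [alpha_j = 0] for [j <> k]; by multilinearity the
   row reduces to its [k]-th entry, and [cok 0 = id], so the sequence is right
   exactness in slot [k]. *)
From HB Require Import structures.
From mathcomp Require Import all_boot all_algebra.
From Stdlib Require Import FunctionalExtensionality IndefiniteDescription.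
Set Implicit Arguments. Unset Strict Implicit. Unset Printing Implicit Defensive.
Import GRing.Theory.
Local Open Scope ring_scope.

Section AdditiveCategory.
Variable C : AddCat.
Implicit Types a b c d : Ob C.

Lemma comp0l a b c (g : Hom b c) : comp (0 : Hom a b) g = 0.
Proof. by apply: (addrI (comp (0 : Hom a b) g)); rewrite -comp_addl !addr0. Qed.

Lemma comp0r a b c (f : Hom a b) : comp f (0 : Hom b c) = 0.
Proof. by apply: (addrI (comp f (0 : Hom b c))); rewrite -comp_addr !addr0. Qed.

Definition epi a b (g : Hom a b) : Prop :=
  forall c (u u' : Hom b c), comp g u = comp g u' -> u = u'.

Lemma iso_id a : is_iso (idm a).
Proof. by exists (idm a); rewrite comp_id_l. Qed.

Lemma iso_epi a b (u : Hom a b) : is_iso u -> epi u.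
Proof.
case=> v [_ vu] c h h' E.
by rewrite -[h]comp_id_l -vu comp_assoc E -comp_assoc vu comp_id_l.
Qed.

Lemma epi_comp a b c (f : Hom a b) (g : Hom b c) :
  epi f -> epi g -> epi (comp f g).
Proof. by move=> ef eg d u u'; rewrite !comp_assoc => /ef; apply: eg. Qed.

Lemma epi_comp_eq0 a b c (f : Hom a b) (h : Hom b c) :
  epi f -> comp f h = 0 -> h = 0.
Proof. by move=> ef fh; apply: ef; rewrite fh comp0r. Qed.

Lemma cokernel_epi a b c (f : Hom a b) (g : Hom b c) :
  is_cokernel f g -> epi g.
Proof.
case=> fg univ d u u' E.
have [|w [_ uniq_w]] := univ d (comp g u); first by rewrite -comp_assoc fg comp0l.
by rewrite (uniq_w u) // (uniq_w u') // E.
Qed.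

Lemma cokpi_cokernel a b (f : Hom a b) : is_cokernel f (cokpi f).
Proof.
split=> [|d h fh]; first exact: cok_zero.
exists (cokdesc f h); split=> [|u' E]; first exact: cok_fac.
by apply: cok_epi; rewrite E cok_fac.
Qed.

Lemma idm_cokernel0 a b : is_cokernel (0 : Hom a b) (idm b).
Proof.
split=> [|d h _]; first exact: comp0l.
by exists h; split=> [|u']; rewrite comp_id_l.
Qed.

Lemma cokernel_compr a b c c' (f : Hom a b) (g : Hom b c) (p : Hom c c') :
  is_iso p -> is_cokernel f g -> is_cokernel f (comp g p).
Proof.
case=> q [pq qp] [fg univ]; split=> [|d h fh]; first by rewrite -comp_assoc fg comp0l.
have [u [gu uniq_u]] := univ d h fh.
exists (comp q u); split; first by rewrite comp_assoc -(comp_assoc p) pq comp_id_l.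
move=> u' E; rewrite -(uniq_u (comp p u')); last by rewrite -comp_assoc.
by rewrite -comp_assoc qp comp_id_l.
Qed.

Lemma cokernel_compl a a' b c (p : Hom a' a) (f : Hom a b) (g : Hom b c) :
  is_iso p -> is_cokernel f g -> is_cokernel (comp p f) g.
Proof.
move=> /iso_epi ep [fg univ]; split=> [|d h]; first by rewrite comp_assoc fg comp0r.
by rewrite comp_assoc => /(epi_comp_eq0 ep); apply: univ.
Qed.

Lemma cokernel_cokdesc_iso a b c (f : Hom a b) (g : Hom b c) :
  is_cokernel f g <-> comp f g = 0 /\ is_iso (cokdesc f g).
Proof.
split=> [[fg univ] | [fg [v [gv vg]]]]; last first.
  rewrite -(cok_fac fg); apply: cokernel_compr; last exact: cokpi_cokernel.
  by exists v.
split=> //; have [v [gv _]] := univ _ (cokpi f) (cok_zero f).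
exists v; split.
  by apply: cok_epi; rewrite -comp_assoc cok_fac // gv comp_id_r.
have [u [_ uniq_u]] := univ _ g fg.
rewrite (uniq_u (comp v (cokdesc f g))); last by rewrite -comp_assoc gv cok_fac.
by rewrite (uniq_u (idm c)) // comp_id_r.
Qed.

Section JointCokernel.
Variables (I : eqType) (o : I -> Ob C) (b : Ob C) (f : forall j, Hom (o j) b).

Definition kills (P : pred I) d (h : Hom b d) : Prop :=
  forall j, P j -> comp (f j) h = 0.

Definition is_joint_cokernel (P : pred I) c (g : Hom b c) : Prop :=
  kills P g /\
  forall d (h : Hom b d), kills P h ->
    exists u : Hom c d, comp g u = h /\
      forall u' : Hom c d, comp g u' = h -> u' = u.

Lemma joint_cokernelP (P : pred I) c (g : Hom b c) :
  is_joint_cokernel P g <->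
  [/\ kills P g, epi g & forall d (h : Hom b d), kills P h -> exists u, comp g u = h].
Proof.
split=> [[Pg univ] | [Pg eg fac]].
  split=> // [d u u' E|d h /univ [u [gu _]]]; last by exists u.
  have [|w [_ uniq_w]] := univ d (comp g u).
    by move=> j Pj; rewrite -comp_assoc Pg // comp0l.
  by rewrite (uniq_w u) // (uniq_w u') // E.
split=> // d h /fac [u gu]; exists u; split=> // u' gu'.
by apply: eg; rewrite gu gu'.
Qed.

Lemma iso_joint_cokernel (P : pred I) c (g : Hom b c) :
  P =1 pred0 -> is_iso g -> is_joint_cokernel P g.
Proof.
move=> P0 ig; apply/joint_cokernelP; split=> [j||d h _]; first by rewrite P0.
- exact: iso_epi.
- by case: ig => v [gv _]; exists (comp v h); rewrite -comp_assoc gv comp_id_l.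
Qed.

(* Since [e] is epi, a map out of [c1] kills [t] iff it kills [comp (f k) g1]. *)
Lemma joint_cokernel_cons (P Q : pred I) (k : I) c1 c2 a'
    (g1 : Hom b c1) (g2 : Hom c1 c2) (e : Hom (o k) a') (t : Hom a' c1) :
  (forall j, Q j = (j == k) || P j) ->
  is_joint_cokernel P g1 -> is_cokernel t g2 -> epi e ->
  comp e t = comp (f k) g1 ->
  is_joint_cokernel Q (comp g1 g2).
Proof.
move=> QE /joint_cokernelP [Pg1 eg1 fac1] cok_t ee etE.
have [tg2 univ2] := cok_t.
have Qk : forall d (h : Hom b d), kills Q h -> comp (f k) h = 0 /\ kills P h.
  by move=> d h Qh; split=> [|j Pj]; apply: Qh; rewrite QE ?eqxx // Pj orbT.
apply/joint_cokernelP; split.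
- move=> j; rewrite QE => /orP [/eqP -> | Pj]; last by rewrite -comp_assoc Pg1 ?comp0l.
  by rewrite -comp_assoc -etE comp_assoc tg2 comp0r.
- exact: epi_comp (cokernel_epi cok_t).
move=> d h /Qk [fkh /fac1 [u1 g1u1]].
have /univ2 [u [g2u _]] : comp t u1 = 0.
  by apply: (epi_comp_eq0 ee); rewrite -comp_assoc etE comp_assoc g1u1.
by exists u; rewrite comp_assoc g2u.
Qed.

Lemma joint_cokernel_single (P : pred I) (k : I) c (g : Hom b c) :
  (forall j, j != k -> f j = 0) -> P k ->
  is_joint_cokernel P g <-> is_cokernel (f k) g.
Proof.
move=> f0 Pk.
have killsE d (h : Hom b d) : kills P h <-> comp (f k) h = 0.
  split=> [/(_ k Pk) // | fkh j _].
  by have [-> | /f0 ->] := eqVneq j k; last rewrite comp0l.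
rewrite /is_joint_cokernel /is_cokernel killsE.
by split=> [] [gk univ]; split=> // d h /killsE; apply: univ.
Qed.
End JointCokernel.

Lemma comp_copair a b t d (f : Hom a t) (g : Hom b t) (h : Hom t d) :
  comp (copair f g) h = copair (comp f h) (comp g h).
Proof. by rewrite /copair comp_addl !comp_assoc. Qed.

Lemma copair_eq0 a b t (f : Hom a t) (g : Hom b t) :
  copair f g = 0 <-> f = 0 /\ g = 0.
Proof.
split=> [E | [-> ->]]; last by rewrite /copair !comp0r addr0.
split.
  have <- : comp (bp_inl a b) (copair f g) = f.
    by rewrite /copair comp_addr -!comp_assoc bp_ll bp_lr comp0l addr0 comp_id_l.
  by rewrite E comp0r.
have <- : comp (bp_inr a b) (copair f g) = g.
  by rewrite /copair comp_addr -!comp_assoc bp_rr bp_rl comp0l add0r comp_id_l.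
by rewrite E comp0r.
Qed.

Lemma rowmor_cokernelE (I : eqType) (o : I -> Ob C) b c
    (f : forall j, Hom (o j) b) (s : seq I) (P : pred I) (g : Hom b c) :
  P =1 [in s] -> is_cokernel (rowmor f s) g <-> is_joint_cokernel f P g.
Proof.
have kills_mem d (h : Hom b d) : comp (rowmor f s) h = 0 <-> kills f [in s] h.
  elim: s => [|j s IH] /=; first by split=> // _; rewrite comp0l.
  rewrite comp_copair copair_eq0 IH; split=> [[fj fs] i | fh].
    by rewrite inE => /orP [/eqP -> | /fs].
  by split=> [|i si]; apply: fh; rewrite inE ?eqxx ?si ?orbT.
move=> Ps; have killsE d (h : Hom b d) : comp (rowmor f s) h = 0 <-> kills f P h.
  by rewrite kills_mem /kills; split=> fh j; [rewrite Ps | rewrite -Ps]; apply: fh.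
rewrite /is_joint_cokernel /is_cokernel killsE.
by split=> [] [gk univ]; split=> // d h /killsE; apply: univ.
Qed.
End AdditiveCategory.

Section Functor.
Variables (n : nat) (A : 'I_n -> AddCat) (B : AddCat) (F : ProdFunctor A B).
Implicit Types x y z u v : obfam A.

Lemma Fm_ext x y (f g : homfam x y) : (forall i, f i = g i) -> Fm F f = Fm F g.
Proof. by move=> E; rewrite (functional_extensionality_dep f g E). Qed.

Lemma Fm_compE x y z (f : homfam x y) (g : homfam y z) (h : homfam x z) :
  (forall i, h i = comp (f i) (g i)) -> Fm F h = comp (Fm F f) (Fm F g).
Proof. by move=> E; rewrite -Fm_comp; apply: Fm_ext. Qed.

Lemma Fm_iso x y (f : homfam x y) : (forall i, is_iso (f i)) -> is_iso (Fm F f).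
Proof.
move=> isof.
pose v : homfam y x := fun i => proj1_sig (constructive_indefinite_description _ (isof i)).
have fv i : comp (f i) (v i) = idm (x i) /\ comp (v i) (f i) = idm (y i).
  by rewrite /v; case: constructive_indefinite_description.
exists (Fm F v); rewrite -!Fm_comp -(Fm_id F x) -(Fm_id F y).
by split; apply: Fm_ext => i; case: (fv i).
Qed.

Definition updm_cod u v (k : 'I_n) (d : Ob (A k)) (w : Hom (u k) d) (g : homfam u v)
  : homfam u (upd v k d) :=
  fun i => match k =P i as r return
      Hom (u i) (match r with
                 | ReflectT e => eq_rect k (fun j => Ob (A j)) d i e
                 | ReflectF _ => v i end) with
   | ReflectT e => match e as e0 in _ = i0 return
        Hom (u i0) (eq_rect k (fun j => Ob (A j)) d i0 e0) with erefl => w end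
   | ReflectF _ => g i
   end.

Definition updm_dom u v (k : 'I_n) (d : Ob (A k)) (w : Hom d (v k)) (g : homfam u v)
  : homfam (upd u k d) v :=
  fun i => match k =P i as r return
      Hom (match r with
           | ReflectT e => eq_rect k (fun j => Ob (A j)) d i e
           | ReflectF _ => u i end) (v i) with
   | ReflectT e => match e as e0 in _ = i0 return
        Hom (eq_rect k (fun j => Ob (A j)) d i0 e0) (v i0) with erefl => w end
   | ReflectF _ => g i
   end.

Lemma updm_cod_iso u v k (d : Ob (A k)) (w : Hom (u k) d) (g : homfam u v) i :
  is_iso w -> (forall j, j != k -> is_iso (g j)) -> is_iso (updm_cod w g i).
Proof.
move=> isow isog; rewrite /updm_cod /upd; case: (k =P i) => [e|ne].
  by case: i / e.
by apply: isog; apply/eqP => /esym.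
Qed.

Lemma updm_dom_iso u v k (d : Ob (A k)) (w : Hom d (v k)) (g : homfam u v) i :
  is_iso w -> (forall j, j != k -> is_iso (g j)) -> is_iso (updm_dom w g i).
Proof.
move=> isow isog; rewrite /updm_dom /upd; case: (k =P i) => [e|ne].
  by case: i / e.
by apply: isog; apply/eqP => /esym.
Qed.

Lemma updm_cokernel u v z k (d : Ob (A k)) (w : Hom (u k) d) (w' : Hom d (z k))
    (f : homfam u v) (g : homfam v z) i :
  i != k -> is_cokernel (f i) (g i) -> is_cokernel (updm_cod w f i) (updm_dom w' g i).
Proof.
rewrite /updm_cod /updm_dom /upd => ik; case: (k =P i) => // e.
by case: i / e ik; rewrite eqxx.
Qed.

Lemma homfam_split_slotin y x (f : homfam y x) k i :
  f i = comp (updm_cod (idm (y k)) f i) (slotin (f k) i).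
Proof.
rewrite /updm_cod /slotin /upd; case: (k =P i) => [e|_].
  by case: i / e => /=; rewrite comp_id_l.
by rewrite comp_id_r.
Qed.

Lemma homfam_split_slotout x z (g : homfam x z) k (d : Ob (A k)) (p : Hom (x k) d)
    (w : Hom d (z k)) :
  comp p w = g k -> forall i, g i = comp (slotout x p i) (updm_dom w g i).
Proof.
move=> pw i; rewrite /updm_dom /slotout /upd; case: (k =P i) => [e|_].
  by case: i / e.
by rewrite comp_id_l.
Qed.

Lemma homfam_split_slotm u v (f : homfam u v) k i :
  f i = comp (updm_cod (idm (u k)) f i)
             (comp (slotm v (f k) i) (updm_dom (idm (v k)) (idfam v) i)).
Proof.
rewrite /updm_cod /updm_dom /slotm /idfam /upd; case: (k =P i) => [e|_].
  by case: i / e => /=; rewrite comp_id_l comp_id_r.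
by rewrite !comp_id_r.
Qed.

Lemma slotin_iso x k (c : Ob (A k)) (f : Hom c (x k)) i : i != k -> is_iso (slotin f i).
Proof.
rewrite /slotin /upd; case: (k =P i) => [e|_ _]; last exact: iso_id.
by case: i / e; rewrite eqxx.
Qed.

Lemma slotin_eq0 x k (c : Ob (A k)) (f : Hom c (x k)) : f = 0 -> slotin f k = 0.
Proof.
rewrite /slotin /upd; case: (k =P k) => [e|//].
by rewrite (eq_irrelevance e (erefl k)).
Qed.

Lemma slotin_slotout_eq0 x k (c d : Ob (A k)) (f : Hom c (x k)) (p : Hom (x k) d) :
  comp f p = 0 -> comp (slotin f k) (slotout x p k) = 0.
Proof.
rewrite /slotin /slotout /upd; case: (k =P k) => [e|//].
by rewrite (eq_irrelevance e (erefl k)).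
Qed.

Section Multilinear.
Hypothesis F_multilinear : multilinear F.

Lemma Fm_slotm0 x k (c d : Ob (A k)) : Fm F (slotm x (0 : Hom c d)) = 0.
Proof.
by apply: (addrI (Fm F (slotm x (0 : Hom c d)))); rewrite -F_multilinear !addr0.
Qed.

Lemma Fm_eq0 u v (f : homfam u v) k : f k = 0 -> Fm F f = 0.
Proof.
move=> fk0; rewrite (Fm_compE (homfam_split_slotm f k)).
by rewrite (Fm_compE (fun i => erefl)) fk0 Fm_slotm0 comp0l comp0r.
Qed.

Hypothesis F_right_exact : right_exact F.

(* Isolate slot k: [f] is [slotin (f k)] up to an iso before it, [g] is
   [slotout (cokpi (f k))] up to an iso after it. *)
Lemma Fm_cokernel_at y x z (f : homfam y x) (g : homfam x z) k :
  is_cokernel (f k) (g k) ->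
  (forall i, i != k -> is_iso (f i) /\ is_iso (g i)) ->
  is_cokernel (Fm F f) (Fm F g).
Proof.
move=> cok_k isos; have [fg_k _] := cok_k.
rewrite (Fm_compE (homfam_split_slotin f k)).
rewrite (Fm_compE (homfam_split_slotout (cok_fac fg_k))).
apply: cokernel_compr.
  apply: Fm_iso => i; apply: updm_dom_iso => [|j /isos []//].
  by case/cokernel_cokdesc_iso: cok_k.
apply: cokernel_compl.
  by apply: Fm_iso => i; apply: updm_cod_iso => [|j /isos []]; first exact: iso_id.
apply/cokernel_cokdesc_iso; split; last exact: F_right_exact.
by rewrite -Fm_comp; apply: (Fm_eq0 (k := k)); apply: slotin_slotout_eq0; apply: cok_zero.
Qed.
End Multilinear.
End Functor.
Arguments Fm_ext {n A B F x y f g}.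
Arguments Fm_compE {n A B F x y z f g h}.
Arguments Fm_iso {n A B F x y f}.

Section Mixed.
Variables (n : nat) (A : 'I_n -> AddCat).
Implicit Types (P Q : pred 'I_n) (a c : obfam A).

Definition mixob P a c : obfam A := fun i => if P i then c i else a i.

Definition mixproj P a c (p : homfam a c) : homfam a (mixob P a c) :=
  fun i => match P i as q return Hom (a i) (if q then c i else a i) with
  | true => p i | false => idm (a i) end.

(* The [true, false] component is junk: [mixstep P Q] is only used with [P] contained in [Q]. *)
Definition mixstep P Q a c (p : homfam a c) : homfam (mixob P a c) (mixob Q a c) :=
  fun i => match P i as q1, Q i as q2
     return Hom (if q1 then c i else a i) (if q2 then c i else a i) with
  | true, true => idm (c i) | true, false => 0
  | false, true => p i | false, false => idm (a i) end.

Definition mixslotin P a (b : obfam A) c (al : homfam b a) (k : 'I_n)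
  : homfam (mixob P (upd a k (b k)) c) (mixob P a c) :=
  fun i => match P i as q
     return Hom (if q then c i else upd a k (b k) i) (if q then c i else a i) with
  | true => idm (c i) | false => slotin (al k) i end.

Lemma mixprojS P Q a c (p : homfam a c) : (forall i, P i -> Q i) ->
  forall i, mixproj Q p i = comp (mixproj P p i) (mixstep P Q p i).
Proof.
move=> PQ i; rewrite /mixproj /mixstep /mixob; have := PQ i.
case: (P i); case: (Q i) => //= PQi; rewrite ?comp_id_l ?comp_id_r //.
by have := PQi isT.
Qed.

Lemma mixstep_iso P Q a c (p : homfam a c) i : P i = Q i -> is_iso (mixstep P Q p i).
Proof. by rewrite /mixstep /mixob; case: (P i); case: (Q i) => //= _; apply: iso_id. Qed.

Lemma mixstep_cokernel P Q a (b : obfam A) c (al : homfam b a) (p : homfam a c) k :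
  P k = false -> Q k = true -> is_cokernel (al k) (p k) ->
  is_cokernel (mixslotin P c al k k) (mixstep P Q p k).
Proof.
rewrite /mixslotin /mixstep /mixob; case: (P k); case: (Q k) => //= _ _.
rewrite /slotin /upd; case: (k =P k) => [e|//].
by rewrite (eq_irrelevance e (erefl k)).
Qed.

Lemma mixslotin_iso P a (b : obfam A) c (al : homfam b a) k i :
  i != k -> is_iso (mixslotin P c al k i).
Proof.
by rewrite /mixslotin /mixob; case: (P i) => ik; [apply: iso_id | apply: slotin_iso].
Qed.

Lemma mixslotin_comm P a (b : obfam A) c (al : homfam b a) (p : homfam a c) k
    (w : Hom (b k) (c k)) :
  P k = false -> forall i,
  comp (mixproj P (updm_dom w p) i) (mixslotin P c al k i)
  = comp (slotin (al k) i) (mixproj P p i).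
Proof.
move=> Pk i; rewrite /mixproj /mixslotin /mixob; case Pi: (P i).
  rewrite /slotin /updm_dom /upd; move: Pi; case: (k =P i) => [e|_ _].
    by case: i / e; rewrite Pk.
  by rewrite comp_id_l comp_id_r.
by rewrite comp_id_l comp_id_r.
Qed.
End Mixed.

Section RightExact.
Variables (n : nat) (A : 'I_n -> AddCat) (B : AddCat) (F : ProdFunctor A B).
Hypotheses (F_multilinear : multilinear F) (F_right_exact : right_exact F).

Lemma Fm_mixproj_joint_cokernel (s : seq 'I_n) : uniq s ->
  forall (P : pred 'I_n) (a b c : obfam A) (al : homfam b a) (p : homfam a c),
  (forall i, P i = (i \in s)) ->
  (forall i, P i -> is_cokernel (al i) (p i)) ->
  is_joint_cokernel (fun j => Fm F (slotin (al j))) P (Fm F (mixproj P p)).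
Proof.
elim: s => [_|k s IH /= /andP [ks us]] P a b c al p Ps cok_p.
  apply: iso_joint_cokernel => [i|]; first by rewrite Ps.
  apply: Fm_iso => i; rewrite /mixproj /mixob; move: (Ps i).
  by case: (P i) => // _; apply: iso_id.
pose P0 := [in s].
have P0k : P0 k = false by apply: negbTE.
have PE i : P i = (i == k) || P0 i by rewrite Ps inE.
have P0P i : P0 i -> P i by move=> P0i; rewrite PE P0i orbT.
have cok_p0 i : P0 i -> is_cokernel (al i) (p i) by move/P0P; apply: cok_p.
pose al' := updm_cod (idm (b k)) al; pose p' := updm_dom (0 : Hom (b k) (c k)) p.
have /joint_cokernelP [_ epi' _] :
    is_joint_cokernel (fun j => Fm F (slotin (al' j))) P0 (Fm F (mixproj P0 p')).
  apply: IH => // i P0i; apply: updm_cokernel; last exact: cok_p0.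
  by apply: contraTneq P0i => ->.
rewrite (Fm_compE (mixprojS p P0P)).
apply: (joint_cokernel_cons PE (IH us P0 _ _ _ al p (fun=> erefl) cok_p0) _ epi').
  apply: (Fm_cokernel_at F_multilinear F_right_exact (k := k)).
    by apply: mixstep_cokernel; rewrite ?PE ?eqxx //; apply: cok_p; rewrite PE eqxx.
  move=> i ik; split; first exact: mixslotin_iso.
  by apply: mixstep_iso; rewrite PE (negbTE ik).
rewrite -!(Fm_compE (fun i => erefl)); apply: Fm_ext => i.
by apply: mixslotin_comm.
Qed.
End RightExact.

Section Characterization.
Variables (n : nat) (A : 'I_n -> AddCat) (B : AddCat) (F : ProdFunctor A B).
Hypothesis F_multilinear : multilinear F.

Lemma first_mor_cokernelE (a b : obfam A) (alpha : homfam b a) d (g : Hom (Fo F a) d) :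
  is_cokernel (first_mor F alpha) g <->
  is_joint_cokernel (fun j => Fm F (slotin (alpha j))) predT g.
Proof. by apply: rowmor_cokernelE => j; rewrite /= mem_enum. Qed.

Lemma right_exact_first_mor_cokernel : right_exact F ->
  forall (a b : obfam A) (alpha : homfam b a),
  is_cokernel (first_mor F alpha) (Fm F (y := fun i => cok (alpha i)) (fun i => cokpi (alpha i))).
Proof.
move=> F_right_exact a b alpha.
apply/first_mor_cokernelE.
apply: (Fm_mixproj_joint_cokernel F_multilinear F_right_exact (enum_uniq _)).
  by move=> i; rewrite mem_enum.
by move=> i _; apply: cokpi_cokernel.
Qed.

Lemma cokernel_Fm_pointwise a (b c : obfam A) (alpha : homfam b a) (p : homfam a c) d
    (h : Hom d (Fo F a)) :
  (forall i, is_cokernel (alpha i) (p i)) ->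
  is_cokernel h (Fm F (y := fun i => cok (alpha i)) (fun i => cokpi (alpha i))) ->
  is_cokernel h (Fm F p).
Proof.
move=> cok_p cok_h.
have p_factor i : p i = comp (cokpi (alpha i)) (cokdesc (alpha i) (p i)).
  by rewrite cok_fac //; case: (cok_p i).
rewrite (Fm_compE p_factor); apply: cokernel_compr cok_h; apply: Fm_iso => i.
by case/cokernel_cokdesc_iso: (cok_p i).
Qed.

Definition slotin_only (x : obfam A) k (c : Ob (A k)) (f : Hom c (x k))
  : homfam (upd x k c) x :=
  fun i => if k == i then slotin f i else 0.

Lemma slotin_only_cokernel x k (c : Ob (A k)) (f : Hom c (x k)) i :
  is_cokernel (slotin_only f i) (slotout x (cokpi f) i).
Proof.
rewrite /slotin_only /slotin /slotout /upd; case: (k =P i) => [e|_].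
  by case: i / e; apply: cokpi_cokernel.
exact: idm_cokernel0.
Qed.

Lemma first_mor_cokernel_right_exact :
  (forall (a b : obfam A) (alpha : homfam b a),
    is_cokernel (first_mor F alpha)
      (Fm F (y := fun i => cok (alpha i)) (fun i => cokpi (alpha i)))) ->
  right_exact F.
Proof.
move=> first_mor_cok x k c f.
suff /cokernel_cokdesc_iso [_ iso_desc] :
  is_cokernel (Fm F (slotin f)) (Fm F (slotout x (cokpi f))) by [].
pose alpha := slotin_only f.
have alpha0 j : j != k -> Fm F (slotin (alpha j)) = 0.
  move=> jk; apply: (Fm_eq0 F_multilinear (k := j)); apply: slotin_eq0.
  by rewrite /alpha /slotin_only eq_sym (negbTE jk).
have cok_k : is_cokernel (Fm F (slotin (alpha k))) (Fm F (slotout x (cokpi f))).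
  apply/(joint_cokernel_single _ alpha0 (P := predT)) => //; apply/first_mor_cokernelE.
  exact: cokernel_Fm_pointwise (slotin_only_cokernel f) (first_mor_cok _ _ alpha).
have alpha_k : alpha k = slotin f k by rewrite /alpha /slotin_only eqxx.
rewrite (Fm_compE (homfam_split_slotin (slotin f) k)) -alpha_k.
apply: cokernel_compl cok_k.
apply: Fm_iso => i; apply: updm_cod_iso; first exact: iso_id.
exact: slotin_iso.
Qed.
End Characterization.

Theorem lemma2p8 (n : nat) (A : 'I_n -> AddCat) (B : AddCat)
    (F : ProdFunctor A B) (HF : multilinear F) :
  right_exact F <->
  forall (a b : obfam A) (alpha : homfam b a),
    is_cokernel (first_mor F alpha)
                (Fm F (x := a) (y := fun i => cok (alpha i))
                      (fun i => cokpi (alpha i))).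
Proof.
split; [exact: right_exact_first_mor_cokernel | exact: first_mor_cokernel_right_exact].
Qed.
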